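(* Under the hypotheses of Proposition 1 (closed-loop scheme of the setting below, $\mathcal P_i(t)$ feasible for all $t$, $\ell_i^{\mathrm c}$ continuous with $\underline\alpha(\|(e,\delta u)\|)\le\ell_i^{\mathrm c}(e,\delta u)\le\overline\alpha(\|(e,\delta u)\|)$ for class-$\mathcal K_\infty$ functions $\underline\alpha,\overline\alpha$, and $V_i^{\mathrm c}\ge0$), suppose in addition that there exist $\bar t\in\mathbb Z_+$ and a pair $(\bar x_i^{\mathrm c,\star},\bar u_i^{\mathrm c,\star})$ such that $\bar x^{\mathrm c,\ast}_i(t)=\bar x_i^{\mathrm c,\star}$ and $\bar u^{\mathrm c,\ast}_i(t)=\bar u_i^{\mathrm c,\star}$ for all $t\ge\bar t$. Then $x_i(t)\to\bar x_i^{\mathrm c,\star}$ and $u_i(t)\to\bar u_i^{\mathrm c,\star}$ as $t\to\infty$.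
   Context: A function $\alpha:\mathbb R_+\to\mathbb R_+$ is of class $\mathcal K_\infty$ if it is continuous, strictly increasing, $\alpha(0)=0$ and $\alpha(s)\to\infty$ as $s\to\infty$. Setting. Agents $\mathcal I=\{1,\dots,M\}$. Agent $i$ has dynamics $x_i(t+1)=f_i(x_i(t),u_i(t))$, $x_i\in\mathbb R^{n_i}$, $u_i\in\mathbb R^{m_i}$, admissible sets $\mathcal X_i\subset\mathbb R^{n_i}$, $\mathcal U_i\subset\mathbb R^{m_i}$, position $p_i=C_ix_i\in\mathbb R^{n_p}$, body radius $r_i>0$, body $\mathcal B_i(t)=\mathbb B(p_i(t),r_i)$ (closed Euclidean ball), reference state $x_i^{\mathrm{ref}}$. A deterministic safe-set generator $\Gamma_i$ assigns to each $x\in\mathcal X_i$ a ball $\Gamma_i(x)=\mathbb B(c_i(x),R_i(x))$. The active safe set at time $t$ is $S_i^\ast(t)=\mathbb B(c_i(t),R_i(t))$. $h:\mathbb R^{n_p}\to\mathbb R$ is a continuous obstacle function. Horizons $N_{\mathrm n},N_{\mathrm c}\in\mathbb Z_{>0}$. Costs: nominal stage and terminal costs $\ell_i^{\mathrm n},V_i^{\mathrm n}$, nonnegative offset cost $V_i^{\mathrm c}$, nonnegative contingency stage cost $\ell_i^{\mathrm c}$, weight $\gamma>0$. Problem $\mathcal P_i(t)$ (given $x_i(t)$, $S_i^\ast(t)$ and a bound $\hat J_i^{\mathrm c}(t)\ge0$): decision variables $x^{\mathrm n}_{i,(k|t)}$ ($k=0..N_{\mathrm n}$), $u^{\mathrm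 n}_{i,(k|t)}$ ($k=0..N_{\mathrm n}-1$), $x^{\mathrm c}_{i,(k|t)}$ ($k=0..N_{\mathrm c}$), $u^{\mathrm c}_{i,(k|t)}$ ($k=0..N_{\mathrm c}-1$), $\bar x^{\mathrm c}_i(t),\bar u^{\mathrm c}_i(t)$; write $p^\bullet_{i,(k|t)}=C_ix^\bullet_{i,(k|t)}$. Minimize $J_i=\sum_{k=0}^{N_{\mathrm n}-1}\ell_i^{\mathrm n}(x^{\mathrm n}_{i,(k|t)},u^{\mathrm n}_{i,(k|t)})+V_i^{\mathrm n}(x^{\mathrm n}_{i,(N_{\mathrm n}|t)},x_i^{\mathrm{ref}})+\gamma V_i^{\mathrm c}(\bar x^{\mathrm c}_i(t),x_i^{\mathrm{ref}})$ subject to: (N1) $x^{\mathrm n}_{i,(0|t)}=x_i(t)$; (N2) $u^{\mathrm n}_{i,(0|t)}=u^{\mathrm c}_{i,(0|t)}$; (N3) $x^{\mathrm n}_{i,(k+1|t)}=f_i(x^{\mathrm n}_{i,(k|t)},u^{\mathrm n}_{i,(k|t)})$, $x^{\mathrm n}_{i,(k+1|t)}\in\mathcal X_i$, $u^{\mathrm n}_{i,(k|t)}\in\mathcal U_i$ for $k=0..N_{\mathrm n}-1$; (C1) $x^{\mathrm c}_{i,(0|t)}=x_i(t)$; (C2) $x^{\mathrm c}_{i,(k+1|t)}=f_i(x^{\mathrm c}_{i,(k|t)},u^{\mathrm c}_{i,(k|t)})$ for $k=0..N_{\mathrm c}-1$; (C3) $x^{\mathrm c}_{i,(k+1|t)}\in\mathcal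 X_i$, $u^{\mathrm c}_{i,(k|t)}\in\mathcal U_i$ for $k=0..N_{\mathrm c}-1$; (C4) $h(p^{\mathrm c}_{i,(k|t)})\ge0$ for $k=0..N_{\mathrm c}$; (C5) $x^{\mathrm c}_{i,(N_{\mathrm c}|t)}=\bar x^{\mathrm c}_i(t)$, $\bar x^{\mathrm c}_i(t)=f_i(\bar x^{\mathrm c}_i(t),\bar u^{\mathrm c}_i(t))$, $(\bar x^{\mathrm c}_i(t),\bar u^{\mathrm c}_i(t))\in\mathcal X_i\times\mathcal U_i$; (C6) $C_i\bar x^{\mathrm c}_i(t)\in S_i^\ast(t)$; (C7) $\|p^{\mathrm c}_{i,(k|t)}-c_i(t)\|\le R_i(t)-r_i$ for $k=0..N_{\mathrm c}$; (C8) $\|p^{\mathrm c}_{i,(l|t)}-c_i(x^{\mathrm c}_{i,(k|t)})\|\le R_i(x^{\mathrm c}_{i,(k|t)})-r_i$ for all $0\le k\le l\le N_{\mathrm c}$; (L) $J_i^{\mathrm c}(t)\le\hat J_i^{\mathrm c}(t)$, where $J_i^{\mathrm c}(t):=\sum_{k=0}^{N_{\mathrm c}-1}\ell_i^{\mathrm c}(x^{\mathrm c}_{i,(k|t)}-\bar x^{\mathrm c}_i(t),u^{\mathrm c}_{i,(k|t)}-\bar u^{\mathrm c}_i(t))+V_i^{\mathrm c}(\bar x^{\mathrm c}_i(t),x_i^{\mathrm{ref}})$. Closed loop: at each $t$ each agent solves $\mathcal P_i(t)$, a star denotes the optimal solution, $J_i^{\mathrm c,\ast}(t)$ is $J_i^{\mathrm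 c}$ evaluated at it, the input $u_i(t)=u^{\mathrm c,\ast}_{i,(0|t)}=u^{\mathrm n,\ast}_{i,(0|t)}$ is applied and the state evolves exactly by $x_i(t+1)=f_i(x_i(t),u_i(t))$. Bound update: $\hat J_i^{\mathrm c}(t+1):=J_i^{\mathrm c,\ast}(t)-\ell_i^{\mathrm c}(x_i(t)-\bar x^{\mathrm c,\ast}_i(t),u_i(t)-\bar u^{\mathrm c,\ast}_i(t))$. Freeze-or-shift (FoS) update: $\tilde S_i(t+1):=\Gamma_i(x_i(t+1))$; $\chi_i(t)=1$ if some $j\neq i$ has $\tilde S_i(t+1)\cap\tilde S_j(t+1)\neq\emptyset$ or $\tilde S_i(t+1)\cap S_j^\ast(t)\neq\emptyset$, else $\chi_i(t)=0$; $S_i^\ast(t+1)=S_i^\ast(t)$ if $\chi_i(t)=1$ and $S_i^\ast(t+1)=\tilde S_i(t+1)$ if $\chi_i(t)=0$. *)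

From HB Require Import structures.
From mathcomp Require Import all_boot all_order all_algebra.
From mathcomp Require Import all_classical all_reals all_analysis.
Set Implicit Arguments. Unset Strict Implicit. Unset Printing Implicit Defensive.
Import Order.TTheory GRing.Theory Num.Theory.
Import numFieldNormedType.Exports.
Local Open Scope classical_set_scope.
Local Open Scope ring_scope.

Definition enorm (R : realType) (d : nat) (v : 'cV[R]_d) : R :=
  Num.sqrt (\sum_(k < d) (v k ord0) ^+ 2).

(* Class K_infinity function R_+ -> R_+, represented as a function R -> R
   whose behaviour on [0, +oo) is constrained. *)
Definition Kinf (R : realType) (a : R -> R) : Prop :=
  [/\ {within [set s : R | 0 <= s], continuous a},
      (forall s1 s2 : R, 0 <= s1 -> s1 < s2 -> a s1 < a s2),
      a 0 = 0 &
      a s @[s --> +oo] --> +oo].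

Record sball (R : realType) (np : nat) := SBall { sc : 'cV[R]_np ; srad : R }.

Definition inball (R : realType) (np : nat) (p : 'cV[R]_np) (B : sball R np) : Prop :=
  enorm (p - sc B) <= srad B.

Definition balls_meet (R : realType) (np : nat) (B1 B2 : sball R np) : Prop :=
  exists p, inball p B1 /\ inball p B2.

Record agent (R : realType) (np : nat) := Agent {
  adx : nat;
  adu : nat;
  af : 'cV[R]_adx -> 'cV[R]_adu -> 'cV[R]_adx;
  aX : set 'cV[R]_adx;
  aU : set 'cV[R]_adu;
  aC : 'M[R]_(np, adx);
  ar : R;
  axref : 'cV[R]_adx;
  aGamma : 'cV[R]_adx -> sball R np;
  aln : 'cV[R]_adx -> 'cV[R]_adu -> R;
  aVn : 'cV[R]_adx -> 'cV[R]_adx -> R;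
  aVc : 'cV[R]_adx -> 'cV[R]_adx -> R;
  alc : 'cV[R]_adx -> 'cV[R]_adu -> R
}.

Arguments af {R np} a _ _.
Arguments aX {R np} a _.
Arguments aU {R np} a _.
Arguments aGamma {R np} a _.
Arguments aln {R np} a _ _.
Arguments aVn {R np} a _ _.
Arguments aVc {R np} a _ _.
Arguments alc {R np} a _ _.

(* Decision variables of P_i(t); trajectories indexed by k : nat, only
   k = 0..N are relevant. *)
Record sol (R : realType) (np : nat) (A : agent R np) := Sol {
  xn : nat -> 'cV[R]_(adx A);
  un : nat -> 'cV[R]_(adu A);
  xc : nat -> 'cV[R]_(adx A);
  uc : nat -> 'cV[R]_(adu A);
  xb : 'cV[R]_(adx A);
  ub : 'cV[R]_(adu A)
}.

Section Problem.
Variables (R : realType) (np : nat) (A : agent R np).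
Variables (h : 'cV[R]_np -> R) (Nn Nc : nat) (gamma : R).

Definition cost_J (s : sol A) : R :=
  \sum_(k < Nn) aln A (xn s k) (un s k) + aVn A (xn s Nn) (axref A)
  + gamma * aVc A (xb s) (axref A).

Definition cost_Jc (s : sol A) : R :=
  \sum_(k < Nc) alc A (xc s k - xb s) (uc s k - ub s) + aVc A (xb s) (axref A).

Definition feasible (x0 : 'cV[R]_(adx A)) (S : sball R np) (Jhat : R) (s : sol A) : Prop :=
     xn s 0 = x0
  /\ un s 0 = uc s 0
  /\ (forall k, (k < Nn)%N ->
        [/\ xn s k.+1 = af A (xn s k) (un s k), aX A (xn s k.+1) & aU A (un s k)])
  /\ xc s 0 = x0
  /\ (forall k, (k < Nc)%N ->
        [/\ xc s k.+1 = af A (xc s k) (uc s k), aX A (xc s k.+1) & aU A (uc s k)])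
  /\ (forall k, (k <= Nc)%N -> 0 <= h (aC A *m xc s k))
  /\ [/\ xc s Nc = xb s, xb s = af A (xb s) (ub s), aX A (xb s) & aU A (ub s)]
  /\ inball (aC A *m xb s) S
  /\ (forall k, (k <= Nc)%N -> enorm (aC A *m xc s k - sc S) <= srad S - ar A)
  /\ (forall k l, (k <= l)%N -> (l <= Nc)%N ->
        enorm (aC A *m xc s l - sc (aGamma A (xc s k)))
          <= srad (aGamma A (xc s k)) - ar A)
  /\ cost_Jc s <= Jhat.

Definition optimal (x0 : 'cV[R]_(adx A)) (S : sball R np) (Jhat : R) (s : sol A) : Prop :=
  feasible x0 S Jhat s /\ (forall s', feasible x0 S Jhat s' -> cost_J s <= cost_J s').

End Problem.

Definition closed_loop (R : realType) (np M : nat) (A : 'I_M -> agent R np)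
  (h : 'cV[R]_np -> R) (Nn Nc : nat) (gamma : R)
  (x : forall i, nat -> 'cV[R]_(adx (A i)))
  (S : 'I_M -> nat -> sball R np) (Jhat : 'I_M -> nat -> R)
  (s : forall i, nat -> sol (A i)) : Prop :=
  [/\ (forall i, 0 <= Jhat i 0),
      (forall i t, optimal h Nn Nc gamma (x i t) (S i t) (Jhat i t) (s i t)),
      (forall i t, x i t.+1 = af (A i) (x i t) (uc (s i t) 0)),
      (forall i t, Jhat i t.+1 = cost_Jc Nc (s i t)
                     - alc (A i) (x i t - xb (s i t)) (uc (s i t) 0 - ub (s i t))) &
      (forall i t,
         let Stil := fun j => aGamma (A j) (x j t.+1) in
         let chi := exists j, j != i /\
                      (balls_meet (Stil i) (Stil j) \/ balls_meet (Stil i) (S j t)) in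
         (chi -> S i t.+1 = S i t) /\ (~ chi -> S i t.+1 = Stil i))].
Arguments closed_loop {R np M} A h Nn Nc gamma x S Jhat s.

From HB Require Import structures.
From mathcomp Require Import all_boot all_order all_algebra.
From mathcomp Require Import all_classical all_reals all_analysis.
From mathcomp Require Import lra.
Import Order.TTheory GRing.Theory Num.Theory.
Import numFieldNormedType.Exports.
Local Open Scope classical_set_scope.
Local Open Scope ring_scope.

(* The bound update makes [Jhat] a nonnegative Lyapunov-like sequence whose
   decrement dominates the contingency stage cost at the applied input, so
   that stage cost tends to zero. Once the artificial equilibrium is frozen
   at (xs, us), the stage cost is bounded below by a class-K_inf function of
   the distance of (x(t), u(t)) to (xs, us), which therefore tends to zero. *)

Section EuclideanNorm.
Context {R : realType}.

Lemma enorm_ge0 {d} (v : 'cV[R]_d) : 0 <= enorm v.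
Proof. exact: sqrtr_ge0. Qed.

Lemma entry_le_enorm d (v : 'cV[R]_d) k : `|v k ord0| <= enorm v.
Proof.
rewrite /enorm -sqrtr_sqr ler_sqrt ?sumr_ge0 // => [|j _]; last exact: sqr_ge0.
by rewrite (bigD1 k) //= lerDl sumr_ge0 // => j _; exact: sqr_ge0.
Qed.

Lemma mx_norm_le_entries d (v : 'cV[R]_d) e :
  0 <= e -> (forall k, `|v k ord0| <= e) -> `|v| <= e.
Proof.
move=> e0 ve; rewrite [`|v|]mx_normE -[e]/((NngNum e0)%:num) num_le.
by apply/bigmax_leP; split=> // -[k j] _; rewrite -num_le /= (ord1 j).
Qed.

Lemma normr_le_enorm_col_mxl n m (v : 'cV[R]_n) (w : 'cV[R]_m) :
  `|v| <= enorm (col_mx v w).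
Proof.
apply: mx_norm_le_entries => [|k]; first exact: enorm_ge0.
by rewrite -(col_mxEu v w); exact: entry_le_enorm.
Qed.

Lemma normr_le_enorm_col_mxr n m (v : 'cV[R]_n) (w : 'cV[R]_m) :
  `|w| <= enorm (col_mx v w).
Proof.
apply: mx_norm_le_entries => [|k]; first exact: enorm_ge0.
by rewrite -(col_mxEd v w); exact: entry_le_enorm.
Qed.

Lemma cvg_dominated_norm0 d (u : nat -> 'cV[R]_d) (b : nat -> R) (l : 'cV[R]_d) :
  (forall t, `|u t - l| <= b t) -> b t @[t --> \oo] --> 0 ->
  u t @[t --> \oo] --> l.
Proof.
move=> ub b0; apply/subr_cvg0/norm_cvg0P.
by apply: (squeeze_cvgr _ (cvg_cst 0) b0); near=> t; rewrite normr_ge0 ub.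
Unshelve. all: by end_near.
Qed.

Lemma cvg_col_mx_enorm0 n m (v : nat -> 'cV[R]_n) (w : nat -> 'cV[R]_m) vl wl :
  enorm (col_mx (v t - vl) (w t - wl)) @[t --> \oo] --> 0 ->
  v t @[t --> \oo] --> vl /\ w t @[t --> \oo] --> wl.
Proof.
move=> e0; split; apply: cvg_dominated_norm0 e0 => t.
- exact: normr_le_enorm_col_mxl.
- exact: normr_le_enorm_col_mxr.
Qed.

End EuclideanNorm.

Section ClassKinf.
Context {R : realType} {a : R -> R}.
Hypothesis Ka : Kinf a.

Lemma Kinf_gt0 s : 0 < s -> 0 < a s.
Proof. by case: Ka => _ inc a0 _ s0; rewrite -a0 inc. Qed.

Lemma Kinf_ge0 s : 0 <= s -> 0 <= a s.
Proof.
rewrite le_eqVlt => /predU1P[<-|/Kinf_gt0/ltW//].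
by case: Ka => _ _ -> _.
Qed.

Lemma Kinf_lt_reflect s e : 0 <= s -> 0 <= e -> a s < a e -> s < e.
Proof.
case: Ka => _ inc _ _ s0 e0 ase; rewrite ltNge; apply/negP.
rewrite le_eqVlt => /predU1P[es|/(inc _ _ e0)]; first by rewrite es ltxx in ase.
by move/(lt_trans ase); rewrite ltxx.
Qed.

Lemma Kinf_cvg0 (z l : nat -> R) :
  (forall t, 0 <= z t) -> (\forall t \near \oo, a (z t) <= l t) ->
  l t @[t --> \oo] --> 0 -> z t @[t --> \oo] --> 0.
Proof.
move=> z0 azl l0; apply/cvgrPdist_lt => e e0.
have lsmall : \forall t \near \oo, `|l t| < a e.
  by apply: cvgr0_norm_lt => //; exact: Kinf_gt0.
near=> t; rewrite sub0r normrN ger0_norm //.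
apply: Kinf_lt_reflect (z0 t) (ltW e0) _.
have azlt : a (z t) <= l t by near: t.
have lt_ae : `|l t| < a e by near: t.
exact: le_lt_trans azlt (le_lt_trans (ler_norm _) lt_ae).
Unshelve. all: by end_near.
Qed.

End ClassKinf.

Lemma cvg_decrement_dominated0 {R : realType} (J l : nat -> R) :
  (forall t, 0 <= J t) -> (forall t, 0 <= l t) ->
  (forall t, l t <= J t - J t.+1) -> l t @[t --> \oo] --> 0.
Proof.
move=> J0 l0 lJ.
have Jdecr : {homo J : n m / (n <= m)%N >-> m <= n}.
  apply/nonincreasing_seqP => t; rewrite -subr_ge0.
  exact: le_trans (l0 t) (lJ t).
have /cvg_ex[L JL] : cvgn J.
  by apply: nonincreasing_is_cvgn Jdecr _; exists 0 => _ [t _ <-].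
have dJ0 : (J t - J t.+1) @[t --> \oo] --> 0.
  by rewrite -(subrr L); apply: cvgB; rewrite ?cvg_shiftS.
by apply: (squeeze_cvgr _ (cvg_cst 0) dJ0); near=> t; rewrite l0 lJ.
Unshelve. all: by end_near.
Qed.

Section ClosedLoop.
Context {R : realType} {np M : nat} {A : 'I_M -> agent R np}.
Context {h : 'cV[R]_np -> R} {Nn Nc : nat} {gamma : R}.
Context {x : forall i, nat -> 'cV[R]_(adx (A i))} {S : 'I_M -> nat -> sball R np}.
Context {Jhat : 'I_M -> nat -> R} {s : forall i, nat -> sol (A i)}.
Hypothesis loop : closed_loop A h Nn Nc gamma x S Jhat s.

Lemma closed_loop_cost_Jc_le i t : cost_Jc Nc (s i t) <= Jhat i t.
Proof.
case: loop => _ opt _ _ _.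
by have [[_ [_ [_ [_ [_ [_ [_ [_ [_ [_ Jc_le]]]]]]]]]] _] := opt i t.
Qed.

Lemma closed_loop_stage_cost_le i t :
  alc (A i) (x i t - xb (s i t)) (uc (s i t) 0 - ub (s i t))
    <= Jhat i t - Jhat i t.+1.
Proof.
case: loop => _ _ _ update _; rewrite update.
by have := closed_loop_cost_Jc_le i t; lra.
Qed.

Lemma closed_loop_Jhat_ge0 i t :
  (forall e du, 0 <= alc (A i) e du) -> (forall a b, 0 <= aVc (A i) a b) ->
  0 <= Jhat i t.
Proof.
move=> lc0 Vc0; apply: le_trans (closed_loop_cost_Jc_le i t).
by rewrite /cost_Jc addr_ge0 ?sumr_ge0.
Qed.

End ClosedLoop.

Theorem corollary2 (R : realType) (np M : nat) (A : 'I_M -> agent R np)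
  (h : 'cV[R]_np -> R) (Nn Nc : nat) (gamma : R)
  (x : forall i, nat -> 'cV[R]_(adx (A i)))
  (S : 'I_M -> nat -> sball R np) (Jhat : 'I_M -> nat -> R)
  (s : forall i, nat -> sol (A i)) (i : 'I_M) (alo ahi : R -> R) :
  (0 < Nn)%N -> (0 < Nc)%N -> 0 < gamma -> continuous h ->
  (forall j, 0 < ar (A j)) ->
  closed_loop A h Nn Nc gamma x S Jhat s ->
  continuous (fun p : 'cV[R]_(adx (A i)) * 'cV[R]_(adu (A i)) => alc (A i) p.1 p.2) ->
  Kinf alo -> Kinf ahi ->
  (forall e du, alo (enorm (col_mx e du)) <= alc (A i) e du
                /\ alc (A i) e du <= ahi (enorm (col_mx e du))) ->
  (forall a b, 0 <= aVc (A i) a b) ->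
  forall (tbar : nat) (xs : 'cV[R]_(adx (A i))) (us : 'cV[R]_(adu (A i))),
  (forall t, (tbar <= t)%N -> xb (s i t) = xs /\ ub (s i t) = us) ->
  x i t @[t --> \oo] --> xs /\ uc (s i t) 0 @[t --> \oo] --> us.
Proof.
move=> _ _ _ _ _ loop _ Klo _ alc_bounds Vc0 tbar xs us frozen.
have alc0 e du : 0 <= alc (A i) e du.
  by apply: le_trans (alc_bounds e du).1; apply: Kinf_ge0 (enorm_ge0 _).
pose stage_cost t := alc (A i) (x i t - xb (s i t)) (uc (s i t) 0 - ub (s i t)).
have stage_cost_cvg0 : stage_cost t @[t --> \oo] --> 0.
  apply: (@cvg_decrement_dominated0 _ (Jhat i)) => t.
  - exact: closed_loop_Jhat_ge0 loop i t alc0 Vc0.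
  - exact: alc0.
  - exact: closed_loop_stage_cost_le loop i t.
apply: cvg_col_mx_enorm0; apply: (Kinf_cvg0 Klo _ _ _ _ stage_cost_cvg0) => [t|].
  exact: enorm_ge0.
near=> t; rewrite /stage_cost; have [-> ->] : xb (s i t) = xs /\ ub (s i t) = us.
  by apply: frozen; near: t; exact: nbhs_infty_ge.
exact: (alc_bounds _ _).1.
Unshelve. all: by end_near.
Qed.
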